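(* Let $T=(V(T),E(T))$ be a rooted directed tree with $k\geq1$ vertices and root $r$. For a bijection $\phi\colon V(T)\to\{X_1,\dots,X_k\}$ set \[\langle T,\phi\rangle=\frac{\prod_{v\in V(T)\setminus\{r\}}\phi(v)}{\prod_{(v_1\to v_2)\in E(T)}\bigl(\phi(v_1)-\phi(v_2)\bigr)}\in\mathbb{Q}(X_1,\dots,X_k),\qquad \langle T\rangle=\sum_{\phi}\langle T,\phi\rangle,\] the sum running over all bijections $\phi\colon V(T)\to\{X_1,\dots,X_k\}$. Then $\langle T\rangle$ is a nonzero integer.
   Context: A rooted directed tree is a tree (connected acyclic graph) in which each edge carries an orientation (arbitrary, not necessarily towards or away from the root) and one vertex is distinguished as the root. $X_1,\dots,X_k$ are independent commuting variables. *)

From HB Require Import structures.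
From mathcomp Require Import all_boot all_order all_algebra all_fingroup.
Set Implicit Arguments. Unset Strict Implicit. Unset Printing Implicit Defensive.
Import Order.TTheory GRing.Theory Num.Theory.
Local Open Scope ring_scope.

(* Vertices of the tree are 'I_k; directed edges are a list of ordered
   pairs (v1, v2) meaning v1 -> v2. *)

Definition und_adj (k : nat) (E : seq ('I_k * 'I_k)) : rel 'I_k :=
  fun u v => ((u, v) \in E) || ((v, u) \in E).

(* The underlying undirected (multi)graph is a tree: no loops, exactly k-1
   edges, and connected (k-1 edges + connected on k vertices = tree). *)
Definition is_tree (k : nat) (E : seq ('I_k * 'I_k)) : Prop :=
  [/\ size E = k.-1,
      all (fun e => e.1 != e.2) E &
      forall u v : 'I_k, connect (und_adj E) u v].

(* <T, phi> evaluated at X_i := x i, where the bijection phi : V -> {X_1..X_k}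
   is encoded by the permutation s via phi(v) = X_(s v). *)
Definition bracket_phi (k : nat) (E : seq ('I_k * 'I_k)) (r : 'I_k)
    (s : 'S_k) (x : 'I_k -> rat) : rat :=
  (\prod_(v < k | v != r) x (s v)) /
  (\prod_(e <- E) (x (s e.1) - x (s e.2))).

Definition bracket (k : nat) (E : seq ('I_k * 'I_k)) (r : 'I_k)
    (x : 'I_k -> rat) : rat :=
  \sum_(s : 'S_k) bracket_phi E r s x.

From HB Require Import structures.
From mathcomp Require Import all_boot all_order all_algebra all_fingroup.
From mathcomp Require Import zify ring.
Import Order.TTheory GRing.Theory Num.Theory.
Local Open Scope ring_scope.

Set Implicit Arguments. Unset Strict Implicit. Unset Printing Implicit Defensive.

(* We generalise <T> to a sum over the bijections f from a rooted subtree S of T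
   onto a set U of variables, and prove by induction on S that it is a constant.
   Fix w0 in U and, in the term of each f, treat the variable X_w0 as an
   indeterminate t; clearing the denominators that involve t gives a polynomial
   in t, and the sum P(t) of these polynomials has degree < |S|.  At t = X_w0,
   P equals the sum times prod_(u <> w0) (X_w0 - X_u).  At t = X_u, u <> w0, it
   vanishes: the terms where f^-1(w0) and f^-1(u) are not adjacent vanish, and
   the others cancel in pairs under exchanging the values of f at these two
   adjacent vertices.  So the sum is the leading coefficient of P, which only
   receives contributions from the f for which f^-1(w0) is a non-root leaf l.
   This gives the recursion <S> = sum_l (-1)^(indeg l) <S \ l>, hence <T> is an
   integer.  It is non-zero because all summands have the sign of <S>: removing
   two leaves l1, l2 in either order and using induction shows that the
   summands for l1 and l2 have the same sign. *)

Lemma roots_eq_scale_prod_XsubC (F : fieldType) (p : {poly F}) (rs : seq F) :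
  uniq rs -> all (root p) rs -> (size p <= (size rs).+1)%N ->
  p = p`_(size rs) *: \prod_(z <- rs) ('X - z%:P).
Proof.
rewrite -uniq_rootsE => uniq_rs roots_p size_p.
have [q def_p] := uniq_roots_prod_XsubC roots_p uniq_rs.
have size_prod : size (\prod_(z <- rs) ('X - z%:P)) = (size rs).+1 := size_prod_XsubC rs id.
have monic_prod : \prod_(z <- rs) ('X - z%:P) \is monic := monic_prod_XsubC _ _ _.
have size_q : (size q <= 1)%N.
  have [->|q_neq0] := eqVneq q 0; first by rewrite size_poly0.
  move: size_p; rewrite def_p size_mul // ?monic_neq0 // size_prod addnS.
  by rewrite -[(size rs).+1]add1n leq_add2r.
rewrite def_p (size1_polyC size_q) coefCM mul_polyC.
by move/monicP: monic_prod; rewrite /lead_coef size_prod /= => ->; rewrite mulr1.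
Qed.

Lemma set_roots_eq_scale_prod_XsubC (F : fieldType) (I : finType) (A : {set I})
    (y : I -> F) (p : {poly F}) :
  {in A &, injective y} -> {in A, forall u, root p (y u)} -> (size p <= #|A|.+1)%N ->
  p = p`_#|A| *: \prod_(u in A) ('X - (y u)%:P).
Proof.
move=> y_inj roots_p size_p.
set rs := [seq y u | u <- enum A].
have size_rs : size rs = #|A| by rewrite size_map -cardE.
have -> : \prod_(u in A) ('X - (y u)%:P) = \prod_(z <- rs) ('X - z%:P).
  by rewrite big_map big_enum.
rewrite -size_rs.
apply: roots_eq_scale_prod_XsubC; rewrite ?size_rs //.
  by rewrite map_inj_in_uniq ?enum_uniq // => a b; rewrite !mem_enum; apply: y_inj.
by apply/allP => z /mapP [u]; rewrite mem_enum => uA ->; apply: roots_p.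
Qed.

Lemma cardsD1_succ (T : finType) (S : {set T}) v n : #|S| = n.+1 -> v \in S -> #|S :\ v| = n.
Proof. by move=> cardS vS; move: cardS; rewrite (cardsD1 v S) vS add1n => -[]. Qed.

Lemma sum_pos_pairwise (R : realDomainType) (I : finType) (P : pred I) (a : I -> R) i0 :
  P i0 -> {in P &, forall i j, 0 < a i * a j} -> 0 < a i0 * \sum_(i | P i) a i.
Proof.
move=> Pi0 pos; rewrite mulr_sumr (bigD1 i0) //=.
rewrite ltr_wpDr ?pos // sumr_ge0 // => i /andP [Pi _].
by apply: ltW; apply: pos.
Qed.

(** * Trees given by an edge relation *)

Section Trees.
Variables (V : finType) (ed : rel V).
Hypothesis ed_irr : irreflexive ed.
Implicit Types (S X : {set V}) (u v w x z l : V).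
Local Open Scope nat_scope.

Definition adj : rel V := fun u v => ed u v || ed v u.
Definition nbhd S v := [set w in S | adj v w].
Definition deg S v : nat := \sum_(w in S) (ed v w + ed w v).
Definition nedges S : nat := \sum_(u in S) \sum_(w in S) ed u w.
Definition adj_in S : rel V := fun u v => [&& u \in S, v \in S & adj u v].
Definition tree S :=
  (forall u v, u \in S -> v \in S -> connect (adj_in S) u v) /\ nedges S < #|S|.

Lemma adjC u v : adj u v = adj v u.
Proof. by rewrite /adj orbC. Qed.

Lemma adjxx v : adj v v = false.
Proof. by rewrite /adj ed_irr. Qed.

Lemma sum_deg S : \sum_(v in S) deg S v = (nedges S).*2.
Proof.
rewrite /deg /nedges -addnn.
under eq_bigr do rewrite big_split /=.
by rewrite big_split /= [X in _ + X = _]exchange_big.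
Qed.

Lemma deg_subset X S v : X \subset S -> deg X v <= deg S v.
Proof.
move=> sXS; rewrite /deg [leqRHS](big_setID X) /=.
by rewrite (setIidPr sXS) leq_addr.
Qed.

Lemma deg_gt0_card S v : v \in S -> 0 < deg S v -> 1 < #|S|.
Proof.
move=> vS; rewrite lt0n sum_nat_eq0 => /forall_inPn [w wS].
rewrite -lt0n => ed_vw; apply/card_gt1P; exists v, w; split => //.
by apply: contraTneq ed_vw => ->; rewrite ed_irr.
Qed.
Lemma deg_gt0 S v : tree S -> 1 < #|S| -> v \in S -> 0 < deg S v.
Proof.
move=> [connS _] /card_gt1P [x [y [xS yS xy]]] vS.
have [u uS uv] : exists2 u, u \in S & u != v.
  by case: (eqVneq x v) => [<-|]; [exists y; rewrite // eq_sym | exists x].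
have /connectP [[|a p] /= path_vu u_last] := connS v u vS uS.
  by rewrite u_last eqxx in uv.
move: path_vu => /andP [/and3P [_ aS va] _].
rewrite /deg (bigD1 a) //=.
by move: va; rewrite /adj; case: (ed v a); case: (ed a v).
Qed.

Lemma leaf_adj_uniq S l a b : deg S l = 1 -> a \in S -> b \in S ->
  adj l a -> adj l b -> a = b.
Proof.
move=> deg_l aS bS la lb; apply/eqP/negPn/negP => ab.
move: deg_l; rewrite /deg (bigD1 a) //= (bigD1 b) /=; last by rewrite bS eq_sym.
move: la lb; rewrite /adj.
by case: (ed l a); case: (ed a l); case: (ed l b); case: (ed b l).
Qed.

Lemma nedges_setD1 S l : l \in S -> nedges S = nedges (S :\ l) + deg S l.
Proof.
move=> lS; rewrite /nedges /deg (bigD1 l) //= big_split /=.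
have -> : \sum_(i in S | i != l) \sum_(w in S) ed i w =
          \sum_(i in S | i != l) (ed i l + \sum_(w in S :\ l) ed i w).
  apply: eq_bigr => i _; rewrite (bigD1 l) //=; congr (_ + _).
  by apply: eq_bigl => w; rewrite in_setD1 andbC.
rewrite big_split /=.
have -> : \sum_(i in S | i != l) \sum_(w in S :\ l) ed i w =
          \sum_(u in S :\ l) \sum_(w in S :\ l) ed u w.
  by apply: eq_bigl => w; rewrite in_setD1 andbC.
have -> : \sum_(i in S | i != l) ed i l = \sum_(i in S) ed i l.
  by rewrite [RHS](bigD1 l) //= ed_irr add0n.
lia.
Qed.

(* The second conjunct is needed to get past a visit of the leaf [l]: its
   unique neighbour is then the vertex just before it. *)
Lemma connect_setD1_leaf S l x s : deg S l = 1 -> x \in S :\ l ->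
  path (adj_in S) x s ->
  (last x s != l -> connect (adj_in (S :\ l)) x (last x s)) /\
  (last x s = l -> forall a, a \in S -> adj l a -> connect (adj_in (S :\ l)) x a).
Proof.
move=> deg_l xSl; elim/last_ind: s => [|s z IH] /=.
  split=> [_|xl]; first exact: connect0.
  by move: xSl; rewrite xl in_setD1 eqxx.
rewrite rcons_path last_rcons => /andP [path_s /and3P [yS zS yz]].
have [IH1 IH2] := IH path_s.
split=> [zl|zl a aS la].
  case: (eqVneq (last x s) l) => [yl|yl]; first by apply: IH2; rewrite -?yl.
  apply: connect_trans (IH1 yl) (connect1 _).
  by rewrite /adj_in !in_setD1 yl zl yS zS yz.
have yl : last x s != l by apply: contraTneq yz => ->; rewrite zl adjxx.
have -> : a = last x s by apply: (leaf_adj_uniq deg_l aS yS la); rewrite adjC -zl.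
exact: IH1.
Qed.

Lemma tree_setD1_leaf S l : tree S -> l \in S -> deg S l = 1 -> tree (S :\ l).
Proof.
move=> [connS nedgesS] lS deg_l; split; last first.
  by move: nedgesS; rewrite (nedges_setD1 lS) deg_l (cardsD1 l S) lS; lia.
move=> u v uSl; rewrite in_setD1 => /andP [vl vS].
have uS : u \in S by move: uSl; rewrite in_setD1 => /andP [].
have /connectP [s path_s v_last] := connS u v uS vS.
have [conn_last _] := connect_setD1_leaf deg_l uSl path_s.
by rewrite v_last; apply: conn_last; rewrite -v_last.
Qed.

Lemma card_leaves_gt1 S : tree S -> 1 < #|S| ->
  1 < #|[set v in S | deg S v == 1]|.
Proof.
move=> treeS gt1.
have deg_leaf v : v \in S -> 2 <= deg S v + (deg S v == 1).
  by move=> vS; have := deg_gt0 treeS gt1 vS; case: (deg S v) => [|[|n]].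
have : \sum_(v in S) 2 <= \sum_(v in S) (deg S v + (deg S v == 1)).
  exact: leq_sum.
rewrite big_split /= sum_deg sum_nat_const.
have -> : \sum_(v in S) (deg S v == 1) = #|[set v in S | deg S v == 1]|.
  rewrite -sum1_card big_mkcond /= [RHS]big_mkcond /=.
  by apply: eq_bigr => v _; rewrite inE; case: (v \in S); case: (deg S v == 1).
by case: treeS => _; rewrite -!muln2; lia.
Qed.

Lemma exists_two_leaves S : tree S -> 1 < #|S| ->
  exists l1 l2, [/\ l1 \in S, l2 \in S, l1 != l2, deg S l1 = 1 & deg S l2 = 1].
Proof.
move=> treeS gt1.
have /card_gt1P [x [y [+ + xy]]] := card_leaves_gt1 treeS gt1.
by rewrite !inE => /andP [xS /eqP deg_x] /andP [yS /eqP deg_y]; exists x, y.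
Qed.

(* A leaf of [S] cannot lie in [X], so it can be pruned. *)
Lemma tree_no_2core S X x : tree S -> X \subset S -> x \in X ->
  ~ {in X, forall z, 1 < deg X z}.
Proof.
move: {2}#|S| (erefl #|S|) => n; elim: n S => [|n IH] S cardS treeS sXS xX deg_X.
  by move: (subsetP sXS x xX); rewrite (cards0_eq cardS) inE.
have gt1 : 1 < #|S|.
  apply: (deg_gt0_card (subsetP sXS x xX)).
  exact: leq_trans (ltnW (deg_X x xX)) (deg_subset x sXS).
have [l [_ [lS _ _ deg_l _]]] := exists_two_leaves treeS gt1.
have lX : l \notin X.
  by apply/negP => lX; have := leq_trans (deg_X l lX) (deg_subset l sXS); rewrite deg_l.
apply: (IH (S :\ l) _ (tree_setD1_leaf treeS lS deg_l) _ xX deg_X).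
  exact: cardsD1_succ.
apply/subsetP => z zX; rewrite in_setD1 (subsetP sXS z zX) andbT.
by apply: contraNneq lX => <-.
Qed.

Lemma tree_nedges S n : #|S| = n.+1 -> tree S -> nedges S = n.
Proof.
elim: n S => [|n IH] S cardS treeS; first by case: treeS => _; rewrite cardS; lia.
have gt1 : 1 < #|S| by rewrite cardS.
have [l [_ [lS _ _ deg_l _]]] := exists_two_leaves treeS gt1.
rewrite (nedges_setD1 lS) deg_l (IH (S :\ l)) ?addn1 ?(cardsD1_succ cardS) //.
exact: tree_setD1_leaf.
Qed.

Lemma tree_no_2cycle S u v : tree S -> u \in S -> v \in S -> ed u v -> ~~ ed v u.
Proof.
move=> treeS uS vS uv; apply/negP => vu.
have neq_uv : u != v by apply: contraTneq uv => ->; rewrite ed_irr.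
apply: (tree_no_2core treeS (_ : [set u; v] \subset S) (set21 u v)).
  by apply/subsetP => z; rewrite !inE => /orP [] /eqP ->.
move=> z; rewrite /deg !inE => /orP [] /eqP ->.
  by rewrite (bigD1 v) ?inE ?eqxx ?orbT //= uv vu; lia.
by rewrite (bigD1 u) ?inE ?eqxx //= uv vu; lia.
Qed.

Lemma deg_gt1 X a b c : b \in X -> c \in X -> b != c -> adj a b -> adj a c ->
  1 < deg X a.
Proof.
move=> bX cX bc ab ac; rewrite /deg (bigD1 b) //= (bigD1 c) /=; last by rewrite cX eq_sym.
by move: ab ac; rewrite /adj; case: (ed a b); case: (ed b a); case: (ed a c);
  case: (ed c a) => //= *; lia.
Qed.

Lemma tree_no_triangle S u v w : tree S -> u \in S -> v \in S -> w \in S ->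
  adj u v -> adj v w -> ~~ adj u w.
Proof.
move=> treeS uS vS wS uv vw; apply/negP => uw.
have neq_uv : u != v by apply: contraTneq uv => ->; rewrite adjxx.
have neq_vw : v != w by apply: contraTneq vw => ->; rewrite adjxx.
have neq_uw : u != w by apply: contraTneq uw => ->; rewrite adjxx.
have inT : [/\ u \in [set u; v; w], v \in [set u; v; w] & w \in [set u; v; w]].
  by rewrite !inE !eqxx ?orbT.
have [uT vT wT] := inT.
apply: (tree_no_2core treeS (_ : [set u; v; w] \subset S) uT).
  by apply/subsetP => z; rewrite !inE => /orP [/orP []|] /eqP ->.
move=> z; rewrite !inE => /orP [/orP []|] /eqP ->.
- exact: (deg_gt1 vT wT).
- by apply: (deg_gt1 uT wT); rewrite // adjC.
- by apply: (deg_gt1 uT vT); rewrite // adjC.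
Qed.

Lemma adj_leaves_subset S l1 l2 : tree S -> l1 \in S -> l2 \in S ->
  deg S l1 = 1 -> deg S l2 = 1 -> adj l1 l2 -> S \subset [set l1; l2].
Proof.
move=> [connS _] l1S l2S deg_l1 deg_l2 adj12.
have closed_l12 : closed (adj_in S) [set l1; l2].
  have step x y : adj_in S x y -> x \in [set l1; l2] -> y \in [set l1; l2].
    move=> /and3P [xS yS xy]; rewrite !inE => /orP [] /eqP ex; subst x.
      by rewrite (leaf_adj_uniq deg_l1 yS l2S xy adj12) eqxx orbT.
    by rewrite (leaf_adj_uniq deg_l2 yS l1S xy) ?eqxx // adjC.
  move=> x y xy; apply/idP/idP; first exact: step.
  by apply: step; move: xy; rewrite /adj_in adjC andbCA.
apply/subsetP => z zS.
by rewrite -(closed_connect closed_l12 (connS _ _ l1S zS)) !inE eqxx.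
Qed.

Lemma tree_deg_card_nbhd S v : tree S -> v \in S -> deg S v = #|nbhd S v|.
Proof.
move=> treeS vS; rewrite /deg /nbhd -sum1_card big_mkcond [RHS]big_mkcond /=.
apply: eq_bigr => w _; rewrite inE /adj; case wS: (w \in S) => //=.
case e1: (ed v w); case e2: (ed w v) => //.
by move: (tree_no_2cycle treeS vS wS e1); rewrite e2.
Qed.

Lemma tree_nbhd_nonroot S r v : tree S -> r \in S -> v \in S ->
  (v != r) <= #|nbhd S v|.
Proof.
move=> treeS rS vS; case: (leqP #|S| 1) => [le1|gt1].
  case: (eqVneq v r) => [//|vr]; move: le1; rewrite leqNgt => /negP [].
  by apply/card_gt1P; exists v, r.
by rewrite -tree_deg_card_nbhd // (leq_trans (leq_b1 _) (deg_gt0 treeS gt1 vS)).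
Qed.

Lemma nbhd_subset S v : nbhd S v \subset S :\ v.
Proof.
apply/subsetP => x; rewrite !inE => /andP [xS vx]; rewrite xS andbT.
by apply: contraTneq vx => ->; rewrite adjxx.
Qed.

Lemma card_nbhd_lt S v : v \in S -> #|nbhd S v| < #|S|.
Proof. by move=> vS; rewrite (cardsD1 v S) vS add1n ltnS subset_leq_card ?nbhd_subset. Qed.

End Trees.

(** * The leaf recursion and its sign *)

Section Removal.
Variables (V : finType) (ed : rel V) (r : V).
Hypothesis ed_irr : irreflexive ed.
Implicit Types (S : {set V}) (v w l : V).
Local Notation nbhd := (nbhd ed).
Local Notation tree := (tree ed).

Definition indeg S v : nat := #|[set w in S | ed w v]|.

Lemma indeg_setD1 S v w : w \in S -> indeg S v = (ed w v + indeg (S :\ w) v)%N.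
Proof.
move=> wS; rewrite /indeg (cardsD1 w) inE wS; congr (_ + #|pred_of_set _|)%N.
by apply/setP => x; rewrite !inE andbA.
Qed.

(* A non-root leaf, or the root of the one-vertex tree. *)
Definition removable S v := #|nbhd S v| == (v != r).

Fixpoint bconst_rec n S : int :=
  if n is n'.+1 then
    \sum_(v in S | removable S v) (-1) ^+ indeg S v * bconst_rec n' (S :\ v)
  else 1.

Definition bconst S := bconst_rec #|S| S.

Lemma bconst0 : bconst set0 = 1.
Proof. by rewrite /bconst cards0. Qed.

Lemma bconstE S : (0 < #|S|)%N ->
  bconst S = \sum_(v in S | removable S v) (-1) ^+ indeg S v * bconst (S :\ v).
Proof.
rewrite /bconst; case cardS: #|S| => [//|n] _ /=; apply: eq_bigr => v /andP [vS _].
by rewrite (cardsD1_succ cardS vS).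
Qed.

Lemma removable_leaf S v : tree S -> (1 < #|S|)%N -> v \in S -> removable S v ->
  v != r /\ deg ed S v = 1%N.
Proof.
move=> treeS gt1 vS; rewrite /removable -tree_deg_card_nbhd // => /eqP deg_v.
by have := deg_gt0 treeS gt1 vS; rewrite deg_v; case: (v != r).
Qed.

Lemma tree_setD1_removable S v : tree S -> r \in S -> (1 < #|S|)%N -> v \in S ->
  removable S v -> tree (S :\ v) /\ r \in S :\ v.
Proof.
move=> treeS rS gt1 vS rem_v; have [vr deg_v] := removable_leaf treeS gt1 vS rem_v.
by rewrite in_setD1 eq_sym vr rS; split; first exact: tree_setD1_leaf.
Qed.

Lemma exists_removable S : tree S -> r \in S -> exists2 v, v \in S & removable S v.
Proof.
move=> treeS rS; case: (leqP #|S| 1) => [le1|gt1].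
  exists r => //; rewrite /removable eqxx /= -leqn0 -ltnS.
  exact: leq_trans (card_nbhd_lt ed_irr rS) le1.
have [l1 [l2 [l1S l2S l12 deg1 deg2]]] := exists_two_leaves treeS gt1.
rewrite /removable; case: (eqVneq l1 r) => [l1r|l1r]; [exists l2 | exists l1] => //.
  by rewrite -tree_deg_card_nbhd // deg2 -l1r (eq_sym l2) l12.
by rewrite -tree_deg_card_nbhd // deg1 l1r.
Qed.

Lemma removable_setD1 S l1 l2 : tree S -> r \in S -> l1 \in S -> l2 \in S -> l1 != l2 ->
  removable S l1 -> removable S l2 ->
  removable (S :\ l1) l2 /\ indeg (S :\ l1) l2 = indeg S l2.
Proof.
move=> treeS rS l1S l2S l12 rem1 rem2.
have gt1 : (1 < #|S|)%N by apply/card_gt1P; exists l1, l2.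
have [l1r deg1] := removable_leaf treeS gt1 l1S rem1.
have [l2r deg2] := removable_leaf treeS gt1 l2S rem2.
have not_adj : ~~ adj ed l2 l1.
  apply: contraL rS => /(adj_leaves_subset treeS l2S l1S deg2 deg1) /subsetP sub.
  apply/negP => /sub; rewrite !inE => /orP [] /eqP rl.
  - by move: l2r; rewrite rl eqxx.
  - by move: l1r; rewrite rl eqxx.
have nbhd_eq : nbhd (S :\ l1) l2 = nbhd S l2.
  apply/setP => x; rewrite !inE; case: (eqVneq x l1) => [->|] //=.
  by rewrite (negbTE not_adj) andbF.
split; first by rewrite /removable nbhd_eq.
by rewrite (indeg_setD1 l2 l1S); move: not_adj; rewrite /adj negb_or => /andP [_ /negbTE ->].
Qed.

Definition removal_signs_agree S :=
  {in S, forall v, removable S v -> 0 < (-1) ^+ indeg S v * bconst (S :\ v) * bconst S}.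

Lemma bconst_neq0_agree S : tree S -> r \in S -> removal_signs_agree S -> bconst S != 0.
Proof.
move=> treeS rS agree; have [v vS rem_v] := exists_removable treeS rS.
by apply: contraTneq (agree v vS rem_v) => ->; rewrite mulr0 ltxx.
Qed.

Lemma removable_pair_pos S l1 l2 : tree S -> r \in S -> l1 \in S -> l2 \in S -> l1 != l2 ->
  removable S l1 -> removable S l2 ->
  removal_signs_agree (S :\ l1) -> removal_signs_agree (S :\ l2) ->
  0 < (-1) ^+ indeg S l1 * bconst (S :\ l1) * ((-1) ^+ indeg S l2 * bconst (S :\ l2)).
Proof.
move=> treeS rS l1S l2S l12 rem1 rem2 agree1 agree2.
have [rem12 indeg12] := removable_setD1 treeS rS l1S l2S l12 rem1 rem2.
have l21 : l2 != l1 by rewrite eq_sym.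
have [rem21 indeg21] := removable_setD1 treeS rS l2S l1S l21 rem2 rem1.
have := agree1 l2 _ rem12; rewrite indeg12 !inE l21 l2S => /(_ isT) pos1.
have := agree2 l1 _ rem21; rewrite indeg21 !inE l12 l1S => /(_ isT) pos2.
have setD1C : S :\ l2 :\ l1 = S :\ l1 :\ l2 by rewrite !setDDl setUC.
rewrite setD1C in pos2; set d := bconst (S :\ l1 :\ l2) in pos1 pos2.
have d_neq0 : d != 0 by apply: contraTneq pos1 => ->; rewrite mulr0 mul0r ltxx.
have d2_gt0 : 0 < d ^+ 2 by rewrite exprn_even_gt0 ?d_neq0 ?orbT.
by rewrite -(pmulr_lgt0 _ d2_gt0); have := mulr_gt0 pos1 pos2; congr (0 < _); ring.
Qed.

Lemma removal_signs_agree_tree n S : #|S| = n -> tree S -> r \in S -> removal_signs_agree S.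
Proof.
elim: n S => [|n IH] S cardS treeS rS; first by move: rS; rewrite (cards0_eq cardS) inE.
have agree_setD1 v : v \in S -> removable S v -> (1 < #|S|)%N -> removal_signs_agree (S :\ v).
  move=> vS rem_v gt1; have [treeSv rSv] := tree_setD1_removable treeS rS gt1 vS rem_v.
  exact: IH (cardsD1_succ cardS vS) treeSv rSv.
have bconst_setD1_neq0 v : v \in S -> removable S v -> bconst (S :\ v) != 0.
  move=> vS rem_v; case: (leqP #|S| 1) => [le1|gt1].
    by rewrite (cards0_eq (_ : #|S :\ v| = 0%N)) ?bconst0 // (cardsD1_succ cardS vS); lia.
  have [treeSv rSv] := tree_setD1_removable treeS rS gt1 vS rem_v.
  exact: bconst_neq0_agree treeSv rSv (agree_setD1 v vS rem_v gt1).
pose a v := (-1) ^+ indeg S v * bconst (S :\ v).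
have a_pos : {in [pred v | (v \in S) && removable S v] &, forall l1 l2, 0 < a l1 * a l2}.
  move=> l1 l2 /andP [l1S rem1] /andP [l2S rem2].
  have [<-|l12] := eqVneq l1 l2.
    by rewrite -expr2 exprn_even_gt0 //= mulf_neq0 ?signr_eq0 ?bconst_setD1_neq0.
  have gt1 : (1 < #|S|)%N by apply/card_gt1P; exists l1, l2.
  by apply: removable_pair_pos => //; apply: agree_setD1.
move=> v vS rem_v; rewrite (bconstE (_ : 0 < #|S|)%N) ?cardS //.
by apply: sum_pos_pairwise; rewrite ?vS.
Qed.

Lemma tree_bconst_neq0 S : tree S -> r \in S -> bconst S != 0.
Proof. by move=> treeS rS; apply/bconst_neq0_agree/(removal_signs_agree_tree erefl). Qed.

End Removal.

(** * Sums over bijections *)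

Section Bracket.
Variables (F : numFieldType) (V : finType) (ed : rel V) (r : V).
Hypothesis ed_irr : irreflexive ed.
Hypothesis ed_asym : forall a b, ed a b -> ~~ ed b a.
Hypothesis no_triangle : forall u v w, adj ed u v -> adj ed v w -> ~~ adj ed u w.
Implicit Types (S U : {set V}) (g y : V -> F).
Local Notation adj := (adj ed).
Local Notation nbhd := (nbhd ed).
Local Notation indeg := (indeg ed).
Local Notation removable := (removable ed r).

(* [bterm S g] is the term <S, phi> of the subtree S, evaluated at phi(v) := g v. *)
Definition bnum S g : F := \prod_(x in S | x != r) g x.
Definition bden S g : F := \prod_(x in S) \prod_(z in S | ed x z) (g x - g z).
Definition bterm S g : F := bnum S g / bden S g.

Lemma eq_bterm S g g' : {in S, g =1 g'} -> bterm S g = bterm S g'.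
Proof.
move=> eq_g; rewrite /bterm /bnum /bden.
congr (_ / _); apply: eq_bigr => x xS; first by rewrite eq_g //; case/andP: xS.
by apply: eq_bigr => z /andP [zS _]; rewrite !eq_g.
Qed.

Lemma bnum_setD1 S v g : v \in S -> bnum S g = g v ^+ (v != r) * bnum (S :\ v) g.
Proof.
move=> vS; rewrite /bnum big_mkcondr (big_setD1 v vS) -big_mkcondr /=.
by case: (v != r); rewrite ?expr0 ?expr1.
Qed.

Lemma bden_setD1_edges S w g : w \in S ->
  bden S g = bden (S :\ w) g * \prod_(z in S | ed w z) (g w - g z) *
             \prod_(x in S | ed x w) (g x - g w).
Proof.
move=> wS.
have row i : \prod_(z in S | ed i z) (g i - g z) =
    (if ed i w then g i - g w else 1) * \prod_(z in S :\ w | ed i z) (g i - g z).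
  by rewrite !big_mkcondr /= (big_setD1 w wS).
have col : \prod_(x in S | ed x w) (g x - g w) =
    \prod_(x in S :\ w) (if ed x w then g x - g w else 1).
  by rewrite big_mkcondr /= (big_setD1 w wS) /= ed_irr mul1r.
rewrite /bden (big_setD1 w wS) /= col.
rewrite [in LHS](eq_bigr _ (fun i _ => row i)).
by rewrite big_split /=; ring.
Qed.

Lemma bden_setD1 S w g : w \in S ->
  bden S g = bden (S :\ w) g * ((-1) ^+ indeg S w * \prod_(x in nbhd S w) (g w - g x)).
Proof.
move=> wS; rewrite (bden_setD1_edges _ wS) -mulrA; congr (_ * _).
have -> : (-1) ^+ indeg S w = \prod_(x in S | ed x w) (-1) :> F.
  by rewrite -prodr_const; apply: eq_bigl => x; rewrite inE.
have -> : \prod_(x in nbhd S w) (g w - g x) =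
    \prod_(z in S | ed w z) (g w - g z) * \prod_(x in S | ed x w) (g w - g x).
  rewrite (eq_bigl (fun x => (x \in S) && adj w x)) => [|x]; last by rewrite inE.
  rewrite !big_mkcondr -big_split /=; apply: eq_bigr => x _; rewrite /adj.
  case e1: (ed w x); case e2: (ed x w); rewrite ?mulr1 ?mul1r //.
  by move: (ed_asym e1); rewrite e2.
rewrite mulrCA -big_split /=; congr (_ * _).
by apply: eq_bigr => x _; rewrite mulN1r opprB.
Qed.

Lemma bden_neq0 S g : {in S &, injective g} -> bden S g != 0.
Proof.
move=> g_inj; apply/prodf_neq0 => x xS; apply/prodf_neq0 => z /andP [zS xz].
by rewrite subr_eq0; apply: contraTneq xz => /(g_inj _ _ xS zS) ->; rewrite ed_irr.
Qed.

Lemma nbhd_setD1 S v w : nbhd (S :\ v) w = nbhd S w :\ v.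
Proof. by apply/setP => x; rewrite !inE andbA. Qed.

Definition distant S v := S :\ v :\: nbhd S v.

Lemma card_distant S v : v \in S -> #|distant S v| = (#|S|.-1 - #|nbhd S v|)%N.
Proof. by move=> vS; rewrite cardsD (setIidPr (nbhd_subset ed_irr S v)) (cardsD1 v S) vS. Qed.

Definition vertex_factor S v g : {poly F} :=
  'X^(v != r) * \prod_(x in distant S v) ('X - (g x)%:P).

(* [bterm S g] with [g v] replaced by the variable, times the product of the
   ('X - g x) over x in S :\ v; the factors for the neighbours of v cancel the
   denominator, see horner_vertex_poly_self. *)
Definition vertex_poly S v g : {poly F} :=
  ((-1) ^+ indeg S v * bterm (S :\ v) g) *: vertex_factor S v g.

Lemma monic_vertex_factor S v g : vertex_factor S v g \is monic.
Proof. by rewrite monicMl ?monicXn // monic_prod_XsubC. Qed.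

Lemma size_vertex_factor S v g :
  size (vertex_factor S v g) = ((v != r) + #|distant S v|).+1.
Proof.
rewrite size_monicM ?monicXn ?monic_neq0 ?monic_prod_XsubC //.
by rewrite size_polyXn -big_enum size_prod_XsubC /= -cardE addnS.
Qed.

Lemma horner_vertex_poly S v g t : (vertex_poly S v g).[t] = (-1) ^+ indeg S v *
  bterm (S :\ v) g * (t ^+ (v != r) * \prod_(x in distant S v) (t - g x)).
Proof.
rewrite /vertex_poly /vertex_factor hornerZ hornerM hornerXn horner_prod.
by under eq_bigr do rewrite hornerXsubC.
Qed.

Lemma eq_vertex_poly S v g g' : {in S :\ v, g =1 g'} ->
  vertex_poly S v g = vertex_poly S v g'.
Proof.
move=> eq_g; rewrite /vertex_poly /vertex_factor (eq_bterm eq_g).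
by congr (_ *: (_ * _)); apply: eq_bigr => x /setDP [xS _]; rewrite eq_g.
Qed.

Lemma size_vertex_poly S v g : v \in S -> ((v != r) <= #|nbhd S v|)%N ->
  (size (vertex_poly S v g) <= #|S|)%N.
Proof.
move=> vS le_deg; apply: leq_trans (size_scale_leq _ _) _.
have := card_nbhd_lt ed_irr vS; rewrite size_vertex_factor card_distant //.
by move: le_deg; case: (v != r) => /=; lia.
Qed.

Lemma coef_vertex_poly S v g : v \in S -> ((v != r) <= #|nbhd S v|)%N ->
  (vertex_poly S v g)`_(#|S|.-1) =
    if removable S v then (-1) ^+ indeg S v * bterm (S :\ v) g else 0.
Proof.
move=> vS le_deg; rewrite coefZ.
have lt_deg := card_nbhd_lt ed_irr vS.
have size_f := size_vertex_factor S v g; rewrite card_distant // in size_f.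
rewrite /removable; case: eqP => [deg_v|/eqP deg_v].
  have -> : #|S|.-1 = (size (vertex_factor S v g)).-1.
    by rewrite size_f -deg_v; move: lt_deg; lia.
  by move/monicP: (monic_vertex_factor S v g) => lead1; rewrite -lead_coefE lead1 mulr1.
rewrite nth_default ?mulr0 // size_f; move: deg_v le_deg lt_deg.
by case: (v != r) => /=; lia.
Qed.

Lemma horner_vertex_poly_self S v g : v \in S -> {in S &, injective g} ->
  (vertex_poly S v g).[g v] = bterm S g * \prod_(x in S :\ v) (g v - g x).
Proof.
move=> vS g_inj; have g_injD1 : {in S :\ v &, injective g}.
  by move=> a b /setD1P [_ aS] /setD1P [_ bS]; apply: g_inj.
rewrite horner_vertex_poly /bterm (bnum_setD1 g vS) (bden_setD1 g vS).
rewrite [\prod_(x in S :\ v) _](big_setID (nbhd S v)) /=.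
rewrite (setIidPr (nbhd_subset ed_irr S v)) -/(distant S v).
have nbhd_neq0 : \prod_(x in nbhd S v) (g v - g x) != 0.
  apply/prodf_neq0 => x; rewrite inE => /andP [xS vx]; rewrite subr_eq0.
  by apply: contraTneq vx => /(g_inj _ _ vS xS) <-; rewrite adjxx.
rewrite -[in LHS]invr_sign; field.
by rewrite bden_neq0 // signr_eq0 nbhd_neq0.
Qed.

Lemma horner_vertex_poly_distant S v w g : w \in distant S v ->
  (vertex_poly S v g).[g w] = 0.
Proof. by move=> wD; rewrite horner_vertex_poly (bigD1 w) //= subrr !(mul0r, mulr0). Qed.

Lemma distant_nbhdI S v w : adj v w -> distant S v :&: (nbhd S w :\ v) = nbhd S w :\ v.
Proof.
move=> vw; apply/setIidPr/subsetP => x; rewrite !inE => /andP [xv /andP [xS wx]].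
by rewrite xv xS andbT (no_triangle vw wx).
Qed.

Lemma distant_nbhdD S v w : v \in S -> adj v w ->
  distant S v :\: (nbhd S w :\ v) = S :\: (nbhd S v :|: nbhd S w).
Proof.
move=> vS vw; apply/setP => x; rewrite !inE.
case: (eqVneq x v) => [->|xv] /=; first by rewrite (adjxx ed_irr) (adjC _ w v) vw vS.
by case: (x \in S); case: (adj v x); case: (adj w x).
Qed.

Lemma horner_vertex_poly_edge S v w g : v \in S -> w \in S -> adj v w -> g v = g w ->
  {in S :\ v :\ w, forall x, g x != g w} ->
  (vertex_poly S v g).[g v] =
    (-1) ^+ ed w v * ((-1) ^+ indeg (S :\ w) v * (-1) ^+ indeg (S :\ v) w) *
    (bnum S g * \prod_(x in S :\: (nbhd S v :|: nbhd S w)) (g v - g x) /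
     bden (S :\ v :\ w) g).
Proof.
move=> vS wS vw gvw g_neq.
have wSv : w \in S :\ v.
  by rewrite in_setD1 wS andbT; apply: contraTneq vw => ->; rewrite (adjxx ed_irr).
rewrite horner_vertex_poly (indeg_setD1 _ v wS) exprD /bterm (bden_setD1 g wSv) nbhd_setD1.
rewrite [\prod_(x in distant S v) _](big_setID (nbhd S w :\ v)) /=.
rewrite distant_nbhdI // distant_nbhdD //.
rewrite (bnum_setD1 g vS) gvw.
have nbhd_neq0 : \prod_(x in nbhd S w :\ v) (g w - g x) != 0.
  apply/prodf_neq0 => x; rewrite !inE => /andP [xv /andP [xS wx]].
  rewrite subr_eq0 eq_sym g_neq // !inE xv xS !andbT.
  by apply: contraTneq wx => ->; rewrite (adjxx ed_irr).
have [->|bden_neq0] := eqVneq (bden (S :\ v :\ w) g) 0.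
  by rewrite !(mul0r, invr0, mulr0).
rewrite -[in RHS](invr_sign _ (indeg (S :\ v) w)); field.
by rewrite bden_neq0 signr_eq0 nbhd_neq0.
Qed.

Lemma ed_adjN u v : adj u v -> ed v u = ~~ ed u v.
Proof.
by rewrite /adj; case e1: (ed u v); case e2: (ed v u) => //=; move: (ed_asym e1); rewrite e2.
Qed.

Lemma horner_vertex_poly_antisym S v w g : v \in S -> w \in S -> adj v w -> g v = g w ->
  {in S :\ v :\ w, forall x, g x != g w} ->
  (vertex_poly S v g).[g v] = - (vertex_poly S w g).[g w].
Proof.
move=> vS wS vw gvw g_neq.
have setD1C : S :\ w :\ v = S :\ v :\ w by rewrite !setDDl setUC.
rewrite (horner_vertex_poly_edge vS wS vw gvw g_neq).
rewrite (horner_vertex_poly_edge wS vS _ (esym gvw)); last first.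
- by move=> x; rewrite setD1C gvw; apply: g_neq.
- by rewrite adjC.
by rewrite (ed_adjN vw) signrN setUC setD1C gvw; ring.
Qed.

Definition bij_on S U : {set {ffun V -> V}} :=
  [set f : {ffun V -> V} |
    [&& dinjectiveb f S, [forall x in S, f x \in U] & [forall x in ~: S, f x == x]]].

Lemma bij_onP S U (f : {ffun V -> V}) : reflect
  [/\ {in S &, injective f}, {in S, forall x, f x \in U} & forall x, x \notin S -> f x = x]
  (f \in bij_on S U).
Proof.
rewrite inE; apply: (iffP and3P) => [[/dinjectiveP f_inj /forall_inP fU /forall_inP f_id]|].
  by split=> // x xS; apply/eqP/f_id; rewrite inE.
move=> [f_inj fU f_id]; split; first exact/dinjectiveP.
  exact/forall_inP.
by apply/forall_inP => x; rewrite inE => /f_id ->.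
Qed.

Section BijOnCard.
Variables (S U : {set V}) (f : {ffun V -> V}).
Hypotheses (card_SU : #|S| = #|U|) (f_bij : f \in bij_on S U).

Lemma bij_on_surj w : w \in U -> exists2 x, x \in S & f x = w.
Proof.
have [f_inj fU _] := bij_onP _ _ _ f_bij.
have f_S : f @: S = U.
  apply/eqP; rewrite eqEcard (card_in_imset f_inj) card_SU leqnn andbT.
  by apply/subsetP => _ /imsetP [x xS ->]; apply: fU.
by rewrite -f_S => /imsetP [x xS ->]; exists x.
Qed.

(* [r] is a junk default, unused when [f] maps [S] onto [U] and [w \in U]. *)
Definition preimg w := odflt r [pick x in S | f x == w].

Lemma preimgP w : w \in U -> preimg w \in S /\ f (preimg w) = w.
Proof.
move=> wU; rewrite /preimg; case: pickP => [x /andP [xS /eqP fx]|no_pre] //=.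
by have [x xS fx] := bij_on_surj wU; move: (no_pre x); rewrite xS fx eqxx.
Qed.

Lemma preimgK x : x \in S -> preimg (f x) = x.
Proof.
have [f_inj fU _] := bij_onP _ _ _ f_bij.
by move=> xS; have [preS /f_inj] := preimgP (fU x xS); apply.
Qed.

Lemma imset_bij_on_setD1 x : x \in S -> f @: (S :\ x) = U :\ f x.
Proof.
have [f_inj fU _] := bij_onP _ _ _ f_bij.
move=> xS; apply/setP => w; rewrite in_setD1; apply/imsetP/andP.
  move=> [z /setD1P [zx zS] ->]; split; last exact: fU.
  by apply: contra_neq zx => /f_inj ->.
move=> [wx wU]; have [z zS fz] := bij_on_surj wU.
by exists z => //; rewrite in_setD1 zS andbT; apply: contra_neq wx => zx; rewrite -fz zx.
Qed.

End BijOnCard.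

Definition bracket_on S U y : F := \sum_(f in bij_on S U) bterm S (y \o f).

Definition bracket_poly S U y w0 : {poly F} :=
  \sum_(f in bij_on S U) vertex_poly S (preimg S f w0) (y \o f).

Section Flip.
Variables (S U : {set V}) (w0 u : V).

Definition flippable (f : {ffun V -> V}) := adj (preimg S f w0) (preimg S f u).

Definition flip (f : {ffun V -> V}) : {ffun V -> V} :=
  [ffun x => if (x \in S) && flippable f then tperm w0 u (f x) else f x].

Lemma preimg_flip f :
  preimg S (flip f) w0 = (if flippable f then preimg S f u else preimg S f w0) /\
  preimg S (flip f) u = (if flippable f then preimg S f w0 else preimg S f u).
Proof.
have tperm_eq a b : (tperm w0 u a == b) = (a == tperm w0 u b).
  by apply/eqP/eqP => [<-|->]; rewrite tpermK.
case: (boolP (flippable f)) => c; rewrite /preimg; split; congr odflt;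
  apply: eq_pick => x /=; rewrite ffunE ?c ?(negbTE c) ?andbT ?andbF //;
  by case: (x \in S); rewrite //= tperm_eq ?tpermL ?tpermR.
Qed.

Lemma flippable_flip f : flippable (flip f) = flippable f.
Proof.
rewrite {1}/flippable; have [-> ->] := preimg_flip f.
by case: (boolP (flippable f)) => c; [rewrite adjC | apply/negbTE].
Qed.

Lemma flipK : involutive flip.
Proof.
move=> f; apply/ffunP => x; rewrite !ffunE flippable_flip.
by case: (_ && _); rewrite ?tpermK.
Qed.

Lemma flip_bij f : w0 \in U -> u \in U -> f \in bij_on S U -> flip f \in bij_on S U.
Proof.
move=> w0U uU /bij_onP [f_inj fU f_id]; apply/bij_onP; split.
- move=> a b aS bS; rewrite !ffunE aS bS /=.
  by case: (flippable f) => [/perm_inj|]; apply: f_inj.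
- move=> x xS; rewrite ffunE xS /=; case: (flippable f); last exact: fU.
  by case: tpermP => [_|_|_ _]; rewrite ?fU.
- by move=> x xS; rewrite ffunE (negbTE xS) f_id.
Qed.

End Flip.

Section BracketPolyRoot.
Variables (S U : {set V}) (y : V -> F) (w0 u : V).
Hypotheses (card_SU : #|S| = #|U|) (y_inj : {in U &, injective y}).
Hypotheses (w0U : w0 \in U) (uU : u \in U) (u_neq_w0 : u != w0).

Lemma horner_vertex_poly_unflippable f : f \in bij_on S U -> ~~ flippable S w0 u f ->
  (vertex_poly S (preimg S f w0) (y \o f)).[y u] = 0.
Proof.
move=> f_bij not_flip; have [vS fv] := preimgP card_SU f_bij w0U.
have [wS fw] := preimgP card_SU f_bij uU.
rewrite -fw -[y (f _)]/((y \o f) _) horner_vertex_poly_distant // !inE wS andbT.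
by rewrite not_flip /=; apply: contra_neq u_neq_w0 => eq_wv; rewrite -fw eq_wv fv.
Qed.

Lemma horner_vertex_poly_flip f : f \in bij_on S U ->
  (vertex_poly S (preimg S (flip S w0 u f) w0) (y \o flip S w0 u f)).[y u] =
  - (vertex_poly S (preimg S f w0) (y \o f)).[y u].
Proof.
move=> f_bij; have [f_inj fU _] := bij_onP _ _ _ f_bij.
have [vS fv] := preimgP card_SU f_bij w0U; have [wS fw] := preimgP card_SU f_bij uU.
set v := preimg S f w0 in vS fv *; set w := preimg S f u in wS fw *.
have wv : w != v by apply: contra_neq u_neq_w0 => eq_wv; rewrite -fw eq_wv fv.
case: (boolP (flippable S w0 u f)) => [vw|not_flip]; last first.
  have -> : flip S w0 u f = f by apply/ffunP => x; rewrite ffunE (negbTE not_flip) andbF.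
  by rewrite horner_vertex_poly_unflippable ?oppr0.
pose g x := if x == v then y u else y (f x).
have gv : g v = y u by rewrite /g eqxx.
have gw : g w = y u by rewrite /g (negbTE wv) fw.
have -> : (vertex_poly S v (y \o f)).[y u] = (vertex_poly S v g).[g v].
  rewrite gv; congr horner; apply: eq_vertex_poly => x /setD1P [/negbTE xv _].
  by rewrite /g xv.
have [-> _] := preimg_flip S w0 u f; rewrite vw -/w.
have -> : (vertex_poly S w (y \o flip S w0 u f)).[y u] = (vertex_poly S w g).[g w].
  rewrite gw; congr horner; apply: eq_vertex_poly => x /setD1P [xw xS].
  rewrite /= ffunE xS vw /g; case: (eqVneq x v) => [->|xv]; first by rewrite fv tpermL.
  by rewrite tpermD //; [apply: contra_neq xv | apply: contra_neq xw] => /esym eq_fx;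
    apply: f_inj => //; rewrite eq_fx ?fv ?fw.
rewrite (horner_vertex_poly_antisym vS wS vw) ?opprK //; first by rewrite gv gw.
move=> x /setD1P [xw /setD1P [xv xS]]; rewrite gw /g (negbTE xv).
apply: contra_neq xw => /y_inj eq_fx; apply: f_inj => //.
by rewrite fw eq_fx ?fU.
Qed.

Lemma bracket_poly_root : (bracket_poly S U y w0).[y u] = 0.
Proof.
rewrite horner_sum; set G := fun f => (vertex_poly S (preimg S f w0) (y \o f)).[y u].
have flip_bijE f : (flip S w0 u f \in bij_on S U) = (f \in bij_on S U).
  apply/idP/idP; last exact: flip_bij.
  by rewrite -{2}(flipK S w0 u f) => /(flip_bij w0U uU).
have : \sum_(f in bij_on S U) G f = - \sum_(f in bij_on S U) G f.
  rewrite {1}(reindex_inj (can_inj (flipK S w0 u))) /= -sumrN.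
  by apply: eq_big => h; rewrite flip_bijE // => /horner_vertex_poly_flip.
by move/eqP; rewrite -addr_eq0 -mulr2n mulrn_eq0 => /eqP.
Qed.

End BracketPolyRoot.

Definition fupd (f : {ffun V -> V}) v w : {ffun V -> V} :=
  [ffun x => if x == v then w else f x].

Lemma bij_on_fupd S U v w0 h : v \in S -> w0 \in U ->
  h \in bij_on (S :\ v) (U :\ w0) -> fupd h v w0 \in bij_on S U.
Proof.
move=> vS w0U /bij_onP [h_inj hU h_id].
have hD1 x : x \in S -> x != v -> h x \in U :\ w0 by move=> xS xv; apply: hU; rewrite !inE xv.
apply/bij_onP; split.
- move=> a b aS bS; rewrite !ffunE.
  case: (eqVneq a v) => [->|av]; case: (eqVneq b v) => [->|bv] //.
  + by move=> eq_w0; move: (hD1 b bS bv); rewrite -eq_w0 !inE eqxx.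
  + by move=> eq_w0; move: (hD1 a aS av); rewrite eq_w0 !inE eqxx.
  + by apply: h_inj; rewrite !inE ?av ?bv.
- move=> x xS; rewrite ffunE; case: (eqVneq x v) => // xv.
  by have /setD1P [] := hD1 x xS xv.
- move=> x xS; rewrite ffunE; case: (eqVneq x v) => [xv|_]; first by rewrite xv vS in xS.
  by apply: h_id; rewrite !inE negb_and xS orbT.
Qed.

Lemma bij_on_setD1 S U v f : v \in S -> f \in bij_on S U ->
  fupd f v v \in bij_on (S :\ v) (U :\ f v).
Proof.
move=> vS /bij_onP [f_inj fU f_id]; apply/bij_onP; split.
- move=> a b /setD1P [av aS] /setD1P [bv bS].
  by rewrite !ffunE (negbTE av) (negbTE bv); apply: f_inj.
- move=> x /setD1P [xv xS]; rewrite ffunE (negbTE xv) !inE fU // andbT.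
  by apply: contra_neq xv => /f_inj ->.
- move=> x; rewrite !inE negb_and negbK ffunE.
  by case: (eqVneq x v) => //= _ xS; apply: f_id.
Qed.

Lemma bracket_on_setD1 S U y v w0 : v \in S -> w0 \in U ->
  \sum_(f in bij_on S U | f v == w0) bterm (S :\ v) (y \o f) =
  bracket_on (S :\ v) (U :\ w0) y.
Proof.
move=> vS w0U.
rewrite (reindex_onto (fun h => fupd h v w0) (fun h => fupd h v v)) /=; last first.
  by move=> f /andP [_ /eqP fv]; apply/ffunP => x; rewrite !ffunE; case: eqP => // ->.
apply: eq_big => [h|h _]; last first.
  by apply: eq_bterm => x /setD1P [xv _]; rewrite /= ffunE (negbTE xv).
rewrite ffunE !eqxx andbT; apply/andP/idP => [[h_bij /eqP hv]|h_bij].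
  by rewrite -hv; move: (bij_on_setD1 vS h_bij); rewrite ffunE eqxx.
have hv : h v = v by have /bij_onP [_ _ ->] := h_bij; rewrite // !inE eqxx.
split; first exact: bij_on_fupd.
by apply/eqP/ffunP => x; rewrite !ffunE; case: eqP => // ->.
Qed.

Section BracketPolyCoef.
Variables (S U : {set V}) (y : V -> F) (w0 : V).
Hypotheses (treeS : tree ed S) (rS : r \in S) (card_SU : #|S| = #|U|).
Hypotheses (y_inj : {in U &, injective y}) (w0U : w0 \in U).

Lemma horner_bracket_poly_self :
  (bracket_poly S U y w0).[y w0] = bracket_on S U y * \prod_(u in U :\ w0) (y w0 - y u).
Proof.
rewrite horner_sum mulr_suml; apply: eq_bigr => f f_bij.
have [f_inj fU _] := bij_onP _ _ _ f_bij; have [vS fv] := preimgP card_SU f_bij w0U.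
have yf_inj : {in S &, injective (y \o f)}.
  by move=> a b aS bS /y_inj eq_yf; apply: f_inj; rewrite // eq_yf ?fU.
have -> : y w0 = (y \o f) (preimg S f w0) by rewrite /= fv.
rewrite (horner_vertex_poly_self vS yf_inj); congr (_ * _).
have -> : U :\ w0 = f @: (S :\ preimg S f w0).
  by rewrite (imset_bij_on_setD1 card_SU f_bij vS) fv.
rewrite big_imset //.
by move=> a b /setD1P [_ aS] /setD1P [_ bS]; apply: f_inj.
Qed.

Lemma size_bracket_poly : (size (bracket_poly S U y w0) <= #|S|)%N.
Proof.
apply: leq_trans (size_sum _ _ _) _; apply/bigmax_leqP => f f_bij.
have [vS _] := preimgP card_SU f_bij w0U.
by apply: size_vertex_poly => //; apply: tree_nbhd_nonroot.
Qed.

Lemma bracket_on_coef : bracket_on S U y = (bracket_poly S U y w0)`_(#|S|.-1).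
Proof.
set P := bracket_poly S U y w0.
have card_Uw0 : #|U :\ w0| = #|S|.-1 by rewrite card_SU (cardsD1 w0 U) w0U.
have y_injD1 : {in U :\ w0 &, injective y}.
  by move=> a b /setD1P [_ aU] /setD1P [_ bU]; apply: y_inj.
have P_eq : P = P`_(#|S|.-1) *: \prod_(u in U :\ w0) ('X - (y u)%:P).
  rewrite -card_Uw0; apply: set_roots_eq_scale_prod_XsubC => //.
    by move=> u /setD1P [uw0 uU]; apply/eqP/bracket_poly_root.
  have S_gt0 : (0 < #|S|)%N by rewrite card_SU; apply/card_gt0P; exists w0.
  by rewrite card_Uw0 prednK // size_bracket_poly.
have prod_neq0 : \prod_(u in U :\ w0) (y w0 - y u) != 0.
  apply/prodf_neq0 => u /setD1P [uw0 uU]; rewrite subr_eq0.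
  by apply: contra_neq uw0 => /y_inj ->.
apply: (mulIf prod_neq0); rewrite -horner_bracket_poly_self -/P {1}P_eq hornerZ horner_prod.
by under eq_bigr do rewrite hornerXsubC.
Qed.

Lemma coef_bracket_poly : (bracket_poly S U y w0)`_(#|S|.-1) =
  \sum_(v in S | removable S v) (-1) ^+ indeg S v * bracket_on (S :\ v) (U :\ w0) y.
Proof.
rewrite coef_sum (partition_big (fun f => preimg S f w0) (mem S)) /=; last first.
  by move=> f f_bij; have [] := preimgP card_SU f_bij w0U.
rewrite [RHS]big_mkcondr /=; apply: eq_bigr => v vS.
have preimg_eq f : f \in bij_on S U -> (preimg S f w0 == v) = (f v == w0).
  move=> f_bij; apply/eqP/eqP => [<-|<-]; last exact: (preimgK card_SU f_bij vS).
  by have [] := preimgP card_SU f_bij w0U.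
rewrite (eq_bigl (fun f => (f \in bij_on S U) && (f v == w0))); last first.
  by move=> f; case f_bij: (f \in bij_on S U); rewrite //= preimg_eq.
rewrite (eq_bigr (fun f : {ffun V -> V} => if removable S v then
          (-1) ^+ indeg S v * bterm (S :\ v) (y \o f) else 0)); last first.
  move=> f /andP [f_bij /eqP fv]; rewrite -fv (preimgK card_SU f_bij vS).
  by rewrite coef_vertex_poly // tree_nbhd_nonroot.
case: ifP => _; last by rewrite big1.
by rewrite -mulr_sumr bracket_on_setD1.
Qed.

Lemma bracket_on_rec : bracket_on S U y =
  \sum_(v in S | removable S v) (-1) ^+ indeg S v * bracket_on (S :\ v) (U :\ w0) y.
Proof. by rewrite bracket_on_coef coef_bracket_poly. Qed.

End BracketPolyCoef.

Lemma bij_on0 U : bij_on set0 U = [set [ffun x => x]].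
Proof.
apply/setP => f; rewrite in_set1; apply/bij_onP/eqP => [[_ _ f_id]|->].
  by apply/ffunP => x; rewrite ffunE f_id ?inE.
by split=> // x; rewrite ?inE ?ffunE.
Qed.

Lemma bracket_on0 U y : bracket_on set0 U y = 1.
Proof.
rewrite /bracket_on bij_on0 big_set1 /bterm /bnum /bden.
by rewrite !big_pred0 ?invr1 ?mulr1 // => x; rewrite inE.
Qed.

Lemma bracket_onE S U y : S = set0 \/ tree ed S /\ r \in S -> #|S| = #|U| ->
  {in U &, injective y} -> bracket_on S U y = (bconst ed r S)%:~R.
Proof.
move: {2}#|S| (erefl #|S|) => n; elim: n S U => [|n IH] S U cardS rooted_S card_SU y_inj.
  by rewrite (cards0_eq cardS) bracket_on0 bconst0.
have [S0|[treeS rS]] := rooted_S; first by rewrite S0 cards0 in cardS.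
have [w0 w0U] : exists w0, w0 \in U by apply/card_gt0P; rewrite -card_SU cardS.
rewrite (bracket_on_rec treeS rS card_SU y_inj w0U) bconstE ?cardS // rmorph_sum.
apply: eq_bigr => v /andP [vS rem_v]; rewrite rmorphM /= intr_sign.
have cardSv := cardsD1_succ cardS vS.
rewrite (IH (S :\ v) (U :\ w0)) //.
- case: n {IH} cardS cardSv => [|n] cardS cardSv; first by left; apply: cards0_eq.
  by right; apply: tree_setD1_removable; rewrite ?cardS.
- by rewrite cardSv (cardsD1_succ (_ : #|U| = n.+1) w0U) // -card_SU.
- by move=> a b /setD1P [_ aU] /setD1P [_ bU]; apply: y_inj.
Qed.

End Bracket.

(** * Trees given by a list of edges *)

Definition edge_rel k (E : seq ('I_k * 'I_k)) : rel 'I_k := fun u v => (u, v) \in E.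

Section EdgeList.
Variables (k : nat) (E : seq ('I_k * 'I_k)).
Hypotheses (k_gt0 : (0 < k)%N) (treeE : is_tree E).
Local Notation ed := (edge_rel E).

Lemma edge_rel_irr : irreflexive ed.
Proof.
by move=> u; apply/negP => uu; case: treeE => _ /allP /(_ _ uu) /=; rewrite eqxx.
Qed.

Lemma nedges_edge_rel : nedges ed setT = #|[pred p | p \in E]|.
Proof.
rewrite /nedges -sum1_card pair_big_dep /= big_mkcond [RHS]big_mkcond /=.
by apply: eq_bigr => -[a b] _ /=; rewrite !in_setT /edge_rel; case: ((a, b) \in E).
Qed.

Lemma tree_edge_rel : tree ed setT.
Proof.
case: treeE => size_E _ connE; split.
  move=> u v _ _; rewrite (eq_connect (e' := und_adj E)) // => a b.
  by rewrite /adj_in !in_setT.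
rewrite nedges_edge_rel cardsT card_ord; apply: leq_ltn_trans (card_size _) _.
by rewrite size_E prednK.
Qed.

Lemma uniq_tree_edges : uniq E.
Proof.
apply/card_uniqP; rewrite -nedges_edge_rel.
have card_T : #|[set: 'I_k]| = k.-1.+1 by rewrite cardsT card_ord prednK.
by rewrite (tree_nedges edge_rel_irr card_T tree_edge_rel); case: treeE.
Qed.

Lemma bracket_edge_rel r x : bracket E r x = bracket_on ed r setT setT x.
Proof.
pose h (s : 'S_k) : {ffun 'I_k -> 'I_k} := [ffun v => s v].
have h_inj : {in setT &, injective h}.
  by move=> s1 s2 _ _ /ffunP eq_s; apply/permP => v; move: (eq_s v); rewrite !ffunE.
have bij_onT : bij_on setT setT = h @: setT.
  apply/setP => f; apply/bij_onP/imsetP => [[f_inj _ _]|[s _ ->]].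
    have f_injT : injective f by move=> a b; apply: f_inj; rewrite in_setT.
    by exists (perm f_injT); rewrite ?in_setT //; apply/ffunP => v; rewrite ffunE permE.
  split=> [a b _ _|v _|v]; rewrite ?in_setT //.
  by rewrite /h !ffunE => /perm_inj.
rewrite /bracket /bracket_on bij_onT big_imset //=.
rewrite (eq_bigl predT) => [|s]; last by rewrite in_setT.
apply: eq_bigr => s _; rewrite /bracket_phi /bterm /bnum /bden; congr (_ / _).
  by apply: eq_big => v; rewrite ?in_setT //= /h ffunE.
rewrite big_uniq ?uniq_tree_edges //= pair_big_dep /=.
by apply: eq_big => [[a b]|[a b] _]; rewrite ?in_setT //= /h !ffunE.
Qed.

End EdgeList.

Unset Implicit Arguments.

Theorem mainTheorem7 (k : nat) (E : seq ('I_k * 'I_k)) (r : 'I_k) :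
  (0 < k)%N -> is_tree E ->
  exists c : int, c != 0 /\
    forall x : 'I_k -> rat, injective x -> bracket E r x = c%:~R.
Proof.
move=> k_gt0 treeE; have ed_irr := edge_rel_irr treeE.
have treeT := tree_edge_rel k_gt0 treeE.
have ed_asym a b : edge_rel E a b -> ~~ edge_rel E b a.
  by apply: (tree_no_2cycle ed_irr treeT); rewrite in_setT.
have no_triangle u v w :
    adj (edge_rel E) u v -> adj (edge_rel E) v w -> ~~ adj (edge_rel E) u w.
  by apply: (tree_no_triangle ed_irr treeT); rewrite in_setT.
exists (bconst (edge_rel E) r setT); split.
  exact: (tree_bconst_neq0 ed_irr treeT (in_setT r)).
move=> x x_inj; rewrite (bracket_edge_rel k_gt0 treeE).
rewrite (bracket_onE ed_irr ed_asym no_triangle) //.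
- by right; rewrite in_setT.
- by move=> a b _ _ /x_inj.
Qed.
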